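(* For every integer $d\ge1$ there exists a $(d+1)$-colored tiling of $\mathbb{R}^d$ all of whose tiles have volume at most $1$ and whose minimal distance is at least $\dfrac{1}{1+2(d-1)\sqrt2}$. In particular, $d+1$ colors suffice for a colored tiling of $\mathbb{R}^d$ by bounded tiles with positive minimal distance.
   Context: A $k$-colored tiling of $\mathbb{R}^d$ is a locally finite collection of closed bounded connected tiles covering $\mathbb{R}^d$, distinct tiles intersecting only in their boundaries, each tile assigned one of $k$ colors. The minimal distance is the infimum of the Euclidean distances $|x-y|$ over $x\in T_i$, $y\in T_j$ with $i\neq j$ and $T_i,T_j$ of the same color. *)

From HB Require Import structures.
From mathcomp Require Import all_boot all_order all_algebra.
From mathcomp Require Import all_classical all_reals all_analysis.
Set Implicit Arguments. Unset Strict Implicit. Unset Printing Implicit Defensive.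
Import Order.TTheory GRing.Theory Num.Theory.
Import numFieldNormedType.Exports.
Local Open Scope classical_set_scope.
Local Open Scope ring_scope.

Section Tilings.
Variables (R : realType) (d : nat).

(* Points of R^d are row vectors 'rV[R]_d (product topology = Euclidean one). *)
Definition euclid_dist (x y : 'rV[R]_d) : R :=
  Num.sqrt (\sum_(i < d) (x ord0 i - y ord0 i) ^+ 2).

Definition boundary (A : set 'rV[R]_d) : set 'rV[R]_d :=
  closure A `\` interior A.

(* Lebesgue (outer) measure on R^d: infimum of total volumes of countable
   covers by closed boxes [a n, b n]. *)
Definition box (a b : 'rV[R]_d) : set 'rV[R]_d :=
  [set x | forall i, a ord0 i <= x ord0 i <= b ord0 i].

Definition volume (A : set 'rV[R]_d) : \bar R :=
  ereal_inf [set s | exists a b : nat -> 'rV[R]_d,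
    (forall n i, a n ord0 i <= b n ord0 i) /\
    A `<=` \bigcup_n box (a n) (b n) /\
    s = (\sum_(0 <= n <oo) (\prod_(i < d) (b n ord0 i - a n ord0 i))%:E)%E].

Definition colored_tiling (k : nat) (I : Type) (T : I -> set 'rV[R]_d)
    (c : I -> 'I_k) : Prop :=
  (forall i, closed (T i) /\ bounded_set (T i) /\ connected (T i)) /\
  (\bigcup_i T i = setT) /\
  (forall i j, i <> j -> T i `&` T j `<=` boundary (T i) `&` boundary (T j)) /\
  (forall x : 'rV[R]_d, exists U, nbhs x U /\ finite_set [set i | T i `&` U !=set0]).

(* Minimal distance: infimum (in the extended reals; +oo if no pair) of the
   Euclidean distances between points of distinct tiles of the same color. *)
Definition min_dist (k : nat) (I : Type) (T : I -> set 'rV[R]_d)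
    (c : I -> 'I_k) : \bar R :=
  ereal_inf [set r | exists i j x y, i <> j /\ c i = c j /\ T i x /\ T j y /\
                       r = (euclid_dist x y)%:E].

End Tilings.

From HB Require Import structures.
From mathcomp Require Import all_boot all_order all_algebra.
From mathcomp Require Import all_classical all_reals all_analysis.
From mathcomp Require Import ring lra zify.
Set Implicit Arguments. Unset Strict Implicit. Unset Printing Implicit Defensive.
Import Order.TTheory GRing.Theory Num.Theory.
Import numFieldNormedType.Exports.
Local Open Scope classical_set_scope.
Local Open Scope ring_scope.

(* A (d+1)-colored tiling of R^d by unit cubes with minimal distance 1/d.

   For an integer vector k in Z^d and a shear 0 < eps <= 1/d, the tile T_k is
   the unit cube whose lower corner has coordinates
       a_j(k) = k_j - eps * (k_{j+1} + ... + k_{d-1}),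
   and its color is k_0 + ... + k_{d-1} modulo d + 1.  Because the shear of
   coordinate j only involves the later coordinates, the tiles can be
   analysed one coordinate at a time, from the last one down:
   - every point lies in some tile (choose k_j as a floor, downwards);
   - a point strictly inside T_k' and lying in T_k forces k = k', so distinct
     tiles only meet on their boundaries;
   - tiles meeting a ball have bounded k, so the tiling is locally finite;
   - if T_k and T_k' are closer than eps, then D = k - k' has all corners
     |a_j(D)| < 1 + eps, which forces D to have all entries in {0, 1} or all
     in {-1, 0}; if moreover k and k' have the same color, the entry sum of D
     is a multiple of d + 1 of absolute value at most d, hence D = 0.
   The file first proves the needed facts about boxes (compact, connected,
   volume at most the product of the sides), then the properties of the
   sheared tiles above, and finally takes eps = 1/d, which dominates the
   bound 1 / (1 + 2 (d - 1) sqrt 2) of the theorem. *)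

(* A set containing every segment from one of its points c to its other
   points is connected: it is the union of these connected segments. *)
Lemma star_connected (R : realType) (V : normedModType R) (A : set V) (c : V) :
  A c -> (forall x t, A x -> 0 <= t <= 1 -> A (c + t *: (x - c))) ->
  connected A.
Proof.
move=> Ac starA.
pose seg x := (fun t : R => c + t *: (x - c)) @` `[0, 1]%classic.
have -> : A = \bigcup_(x in A) seg x.
  apply/seteqP; split=> [x Ax|x [y Ay [t t01 <-]]].
    exists x => //; exists 1; last by rewrite scale1r addrC subrK.
    by rewrite /= in_itv /= ler01 lexx.
  by apply: starA; rewrite /= in_itv in t01.
apply: bigcup_connected.
  by exists c => x _; exists 0; rewrite ?scale0r ?addr0 //= in_itv /= lexx ler01.
move=> x _; apply: connected_continuous_connected; first exact: segment_connected.
apply: continuous_subspaceT => t.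
apply: (@continuousD _ _ _ (fun=> c) (fun t : R => t *: (x - c))).
  exact: cst_continuous.
by apply: continuousZr_tmp => ?; apply: cvg_id.
Qed.

Section Boxes.
Variables (R : realType) (d : nat).
Implicit Types (a b x y : 'rV[R]_d).

(* A box is the product of the segments [a_i, b_i]. *)
Lemma box_compact a b : compact (box a b).
Proof.
have -> : box a b = [set x | forall i, `[a ord0 i, b ord0 i]%classic (x ord0 i)].
  by apply/seteqP; split=> x /= xab i; have := xab i; rewrite /= in_itv.
by apply: (@rV_compact R d (fun i => `[a ord0 i, b ord0 i]%classic)) => i;
  exact: segment_compact.
Qed.

Lemma box_closed a b : closed (box a b).
Proof. apply: compact_closed; [exact: norm_hausdorff | exact: box_compact]. Qed.

Lemma box_bounded a b : bounded_set (box a b).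
Proof. apply: compact_bounded; exact: box_compact. Qed.

(* Boxes are convex, hence star-shaped about each of their points. *)
Lemma box_connected a b : connected (box a b).
Proof.
have [->|/set0P[c boxc]] := eqVneq (box a b) set0; first exact: connected0.
apply: (star_connected boxc) => x t boxx /andP[t0 t1] i.
rewrite !mxE; move: (boxc i) (boxx i) => /andP[c1 c2] /andP[x1 x2].
by apply/andP; split; nra.
Qed.

(* The outer measure of a box is at most the product of its side lengths:
   cover it by itself and by degenerate boxes (of volume 0 as d > 0). *)
Lemma volume_box a b : (0 < d)%N -> (forall i, a ord0 i <= b ord0 i) ->
  (volume (box a b) <= (\prod_(i < d) (b ord0 i - a ord0 i))%:E)%E.
Proof.
move=> d_gt0 ab.
pose an n : 'rV[R]_d := if n == 0%N then a else 0.
pose bn n : 'rV[R]_d := if n == 0%N then b else 0.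
have an_le_bn n i : an n ord0 i <= bn n ord0 i by rewrite /an /bn; case: eqP.
apply: ereal_inf_lbound; exists an, bn; split=> //; split.
  by move=> x boxx; exists 0%N.
have vol_ge0 n : (0 <= (\prod_(i < d) (bn n ord0 i - an n ord0 i))%:E)%E.
  by rewrite lee_fin; apply: prodr_ge0 => i _; rewrite subr_ge0.
rewrite nneseries_recl // eseries0 ?adde0 // => n n_gt0 _.
rewrite /an /bn; case: eqP n_gt0 => [->//|_ _].
rewrite (eq_bigr (fun=> 0)) => [|i _]; last by rewrite mxE subrr.
by rewrite prodr_const card_ord expr0n eqn0Ngt d_gt0.
Qed.

Lemma coord_le_dist x y j : `|x ord0 j - y ord0 j| <= euclid_dist x y.
Proof.
rewrite /euclid_dist -sqrtr_sqr ler_sqrt; last by apply: sumr_ge0 => i _; exact: sqr_ge0.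
by rewrite (bigD1 j) //= lerDl; apply: sumr_ge0 => i _; exact: sqr_ge0.
Qed.

End Boxes.

Lemma down_ind (d : nat) (P : nat -> Prop) :
  (forall n, (d <= n)%N -> P n) -> (forall n, (n < d)%N -> P n.+1 -> P n) ->
  forall n, P n.
Proof.
move=> P_ge P_step.
suff P_le : forall m n, (d - n <= m)%N -> P n by move=> n; exact: P_le (leqnn _).
elim=> [|m IH] n dn; first by apply: P_ge; lia.
have [/P_ge //|lt_nd] := leqP d n; apply: P_step lt_nd _; apply: IH; lia.
Qed.

Lemma ord_leq_split (d : nat) (j l : 'I_d) : (j <= l)%N -> l = j \/ (j < l)%N.
Proof. by rewrite leq_eqVlt => /orP[/eqP/val_inj ->|]; [left|right]. Qed.

Section SkewLattice.
Variables (R : realType) (d : nat) (eps : R).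
Implicit Types (k D : 'I_d -> int) (x y : 'rV[R]_d).

Definition tail_sum k (j : 'I_d) : int := \sum_(l < d | (j < l)%N) k l.
Definition corner k (j : 'I_d) : R := (k j)%:~R - eps * (tail_sum k j)%:~R.
Definition tile k : set 'rV[R]_d :=
  box (\row_j corner k j) (\row_j (corner k j + 1)).
Definition color k : 'I_d.+1 := inord (absz ((\sum_l k l) %% d.+1%:Z)%Z).

Lemma tileP k x : tile k x <-> forall j, corner k j <= x ord0 j <= corner k j + 1.
Proof. by split=> kx j; move: (kx j); rewrite !mxE. Qed.

Lemma tail_sum_eq k k' (j : 'I_d) :
  (forall l : 'I_d, (j < l)%N -> k l = k' l) -> tail_sum k j = tail_sum k' j.
Proof. by move=> kk'; apply: eq_bigr => l /kk'. Qed.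

Lemma cornerB k k' j : corner k j - corner k' j = corner (fun l => k l - k' l) j.
Proof. by rewrite /corner /tail_sum sumrB !rmorphB /=; ring. Qed.

Lemma cornerN D j : corner (fun l => - D l) j = - corner D j.
Proof. by rewrite /corner /tail_sum sumrN !rmorphN /=; ring. Qed.

(* The tiles cover R^d: the k_j are chosen from the last coordinate down,
   k_j being the floor of x_j + eps * (k_{j+1} + ... + k_{d-1}). *)
Lemma tile_cover x : exists k, tile k x.
Proof.
pose covers k n := forall j : 'I_d, (n <= j)%N -> corner k j <= x ord0 j <= corner k j + 1.
suff [k kx] : exists k, covers k 0 by exists k; apply/tileP => j; exact: kx.
apply: (@down_ind d (fun n => exists k, covers k n)).
  by move=> n dn; exists (fun=> 0) => j; have := ltn_ord j; lia.
move=> n lt_nd [k kx]; pose j0 := Ordinal lt_nd.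
pose z := x ord0 j0 + eps * (tail_sum k j0)%:~R.
pose k' l := if l == j0 then Num.floor z else k l.
have tail_k' (j : 'I_d) : (n <= j)%N -> tail_sum k' j = tail_sum k j.
  move=> le_nj; apply: tail_sum_eq => l lt_jl; rewrite /k'.
  by case: eqP => // l_j0; move: lt_jl le_nj; rewrite l_j0 /=; lia.
exists k' => j le_nj; rewrite /corner tail_k' //.
have [-> | ne_j] := eqVneq j j0.
  rewrite /k' eqxx; have := floor_le z; have := floorD1_gt z.
  by rewrite rmorphD /= /z => ? ?; apply/andP; split; lra.
rewrite /k' (negbTE ne_j); apply: kx.
by have : val j != val j0 by []; rewrite /= in le_nj *; lia.
Qed.

(* A point of T_k lying strictly inside T_k' forces k = k': compare the
   coordinates from the last one down. *)
Lemma tile_eq_of_strict k k' y : tile k y ->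
  (forall j, corner k' j < y ord0 j < corner k' j + 1) -> k = k'.
Proof.
move=> /tileP ky ky'.
suff /(_ 0%N) kk' : forall n (l : 'I_d), (n <= l)%N -> k l = k' l.
  by apply: funext => j; exact: kk'.
apply: (@down_ind d (fun n => forall l : 'I_d, (n <= l)%N -> k l = k' l)).
  by move=> n dn l; have := ltn_ord l; lia.
move=> n lt_nd kk' l; pose j := Ordinal lt_nd.
case/(@ord_leq_split _ j l) => [-> | lt_nl]; last exact: kk'.
move: (ky j) (ky' j); rewrite /corner (@tail_sum_eq _ _ j kk') => /andP[? ?] /andP[? ?].
have lt1 : (k j - k' j < 1)%R by rewrite -(ltr_int R) rmorphB /=; lra.
have gtN1 : (-1 < k j - k' j)%R by rewrite -(ltr_int R) rmorphB /=; lra.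
lia.
Qed.

Lemma tile_strict_near k x e : tile k x -> 0 < e ->
  exists y, ball x e y /\ forall j, corner k j < y ord0 j < corner k j + 1.
Proof.
move=> /tileP kx e_gt0; pose t := e / (e + 1).
have t_gt0 : 0 < t by rewrite divr_gt0 //; lra.
have tE : t * (e + 1) = e by rewrite divfK //; apply: lt0r_neq0; lra.
have t_lt1 : t < 1 by nra.
exists (\row_j (x ord0 j + t * (corner k j + 2^-1 - x ord0 j))); split.
  split=> // i j; rewrite ord1 /ball /= !mxE; move: (kx j) => /andP[? ?].
  by rewrite ltr_norml; apply/andP; split; nra.
by move=> j; rewrite mxE; move: (kx j) => /andP[? ?]; apply/andP; split; nra.
Qed.

Lemma tile_not_interior k k' x : k <> k' -> tile k x -> tile k' x -> ~ (tile k)^° x.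
Proof.
move=> neq_kk' kx k'x /nbhs_ballP [e /= e_gt0 ball_k]; apply: neq_kk'.
have [y [xy y_in]] := tile_strict_near k'x e_gt0.
exact: tile_eq_of_strict (ball_k _ xy) y_in.
Qed.

Lemma tile_volume k : (0 < d)%N -> (volume (tile k) <= 1)%E.
Proof.
move=> d_gt0; apply: le_trans (volume_box _ _) _ => // [j|]; first by rewrite !mxE lerDl.
rewrite lee_fin (eq_bigr (fun=> 1)) ?prodr_const ?expr1n // => j _.
by rewrite !mxE addrC addKr.
Qed.

Lemma card_tail (j : 'I_d) : (#|[pred l : 'I_d | (j < l)%N]| <= d.-1)%N.
Proof.
have -> : d.-1 = #|[pred l : 'I_d | l != j]| by rewrite cardC1 card_ord.
apply: subset_leq_card; apply/fintype.subsetP => l.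
by rewrite !inE; apply: contraTN => /eqP ->; rewrite ltnn.
Qed.

(* There are finitely many integer vectors with entries in [-N, N]:
   they are images of finite functions into 'I_(2N+1). *)
Lemma bounded_int_vectors_finite (N : nat) :
  finite_set [set k : 'I_d -> int | forall j, - (N%:Z) <= k j <= N%:Z].
Proof.
pose g (f : {ffun 'I_d -> 'I_(N + N).+1}) j := (f j : nat)%:Z - N%:Z.
apply: (@sub_finite_set _ _ (g @` setT)); last exact/finite_image/finite_finset.
move=> k kN; exists [ffun j => inord (absz (k j + N%:Z))] => //.
by apply: funext => j; rewrite /g ffunE inordK; have := kN j; lia.
Qed.

Hypothesis eps_gt0 : 0 < eps.
Hypothesis eps_small : eps * d%:R <= 1.

(* Bounded corners come from bounded integer vectors: recursively
   |k_j| <= M + eps * (d - 1) * d * M <= d * M. *)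
Lemma int_bound_of_corner_bound k (M : R) : 0 <= M ->
  (forall j, `|corner k j| <= M) -> forall j, `|(k j)%:~R : R| <= d%:R * M.
Proof.
move=> M_ge0 cornerM j.
pose bounded_from n := forall l : 'I_d, (n <= l)%N -> `|(k l)%:~R : R| <= d%:R * M.
suff /(_ 0%N) kM : forall n, bounded_from n by exact: kM.
apply: (@down_ind d bounded_from) => [n dn l|n lt_nd kM l]; first by have := ltn_ord l; lia.
pose j0 := Ordinal lt_nd; case/(@ord_leq_split _ j0 l) => [-> | lt_nl]; last exact: kM.
have tail_bound : `|(tail_sum k j0)%:~R : R| <= d.-1%:R * (d%:R * M).
  rewrite /tail_sum rmorph_sum /=; apply: le_trans (ler_norm_sum _ _ _) _.
  apply: (@le_trans _ _ (\sum_(l < d | (j0 < l)%N) (d%:R * M))); first exact: ler_sum.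
  rewrite sumr_const -[_ *+ #|_|]mulr_natl; apply: (ler_wpM2r (mulr_ge0 (ler0n R d) M_ge0)).
  by rewrite ler_nat; exact: card_tail.
have eps_tail : eps * `|(tail_sum k j0)%:~R : R| <= d.-1%:R * M.
  apply: le_trans (ler_wpM2l (ltW eps_gt0) tail_bound) _.
  have -> : eps * (d.-1%:R * (d%:R * M)) = eps * d%:R * (d.-1%:R * M) by ring.
  by apply: ler_piMl; rewrite ?mulr_ge0.
have d_pred : d%:R = d.-1%:R + 1 :> R by rewrite natr1 prednK //; lia.
have -> : (k j0)%:~R = corner k j0 + eps * (tail_sum k j0)%:~R :> R by rewrite /corner; ring.
apply: le_trans (ler_normD _ _) _; rewrite normrM (gtr0_norm eps_gt0) d_pred.
have := cornerM j0; lra.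
Qed.

Lemma tile_locally_finite x :
  exists U, nbhs x U /\ finite_set [set k | tile k `&` U !=set0].
Proof.
exists (ball x 1); split; first by apply/nbhs_ballP; exists 1 => /=.
pose M := 2 + \sum_i `|x ord0 i|.
have M_ge0 : 0 <= M by rewrite addr_ge0 // sumr_ge0.
have /archi_boundP := mulr_ge0 (ler0n R d) M_ge0; set N := Num.Def.archi_bound _ => NM.
apply: sub_finite_set (bounded_int_vectors_finite N) => k [y [ky xy]] j.
have cornerM i : `|corner k i| <= M.
  move/tileP: ky => /(_ i) /andP[? ?]; case: xy => _ /(_ ord0 i); rewrite /ball /=.
  have : `|x ord0 i| <= \sum_i `|x ord0 i| by rewrite (bigD1 i) //= lerDl sumr_ge0.
  by rewrite /M !ltr_norml !ler_norml => /andP[? ?] /andP[? ?]; apply/andP; split; lra.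
have : `|(k j)%:~R : R| <= (N%:Z)%:~R.
  exact: le_trans (int_bound_of_corner_bound M_ge0 cornerM j) (ltW NM).
by rewrite ler_norml -rmorphN /= !ler_int.
Qed.

Definition binary_from D (n : nat) := forall l : 'I_d, (n <= l)%N -> 0 <= D l <= 1.
Definition coherent_from D n := binary_from D n \/ binary_from (fun l => - D l) n.

Lemma tail_sum_binary D (j : 'I_d) : binary_from D j.+1 -> 0 <= tail_sum D j <= d%:Z - 1.
Proof.
move=> Dbin; apply/andP; split; first by apply: sumr_ge0 => l /Dbin/andP[].
apply: (@le_trans _ _ (\sum_(l < d | (j < l)%N) (1 : int))).
  by apply: ler_sum => l /Dbin/andP[].
rewrite sumr_const; have := ltn_ord j; have := card_tail j.
by move: #|_| => n; rewrite natz; lia.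
Qed.

(* One step of the coherence argument: if D is binary after j and the
   corner of D at j is small, then D_j in {0, 1}, or D_j = -1 and D vanishes
   after j. *)
Lemma coherent_step D (j : 'I_d) :
  binary_from D j.+1 -> `|corner D j| < 1 + eps -> coherent_from D j.
Proof.
move=> Dbin; have /andP[S_ge0 S_le] := tail_sum_binary Dbin.
have eps_le1 : eps <= 1.
  have : 1 <= d%:R :> R by rewrite ler1n; have := ltn_ord j; lia.
  by move=> d_ge1; apply: le_trans eps_small; exact: ler_peMr (ltW eps_gt0) d_ge1.
rewrite /corner ltr_norml => /andP[lo hi].
have [S0 | S_neq0] := eqVneq (tail_sum D j) 0.
  move: lo hi; rewrite S0 mulr0 subr0 => lo hi.
  have Dj_lt2 : (D j < 2)%R by rewrite -(ltr_int R); lra.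
  have Dj_gtN2 : (-2 < D j)%R by rewrite -(ltr_int R); lra.
  have [Dj_ge0 | Dj_lt0] := lerP 0 (D j).
    by left=> l /ord_leq_split [-> | /Dbin //]; lia.
  right=> l /ord_leq_split [-> | lt_jl]; first lia.
  by have -> : D l = 0 by apply: (psumr_eq0P _ S0) => // i /Dbin /andP[].
have S_ge1 : 1 <= (tail_sum D j)%:~R :> R by rewrite ler1z; lia.
have S_le' : (tail_sum D j)%:~R <= d%:R - 1 :> R.
  by move: S_le; rewrite -(ler_int R) rmorphB /= -pmulrn.
have epsS_lo : eps <= eps * (tail_sum D j)%:~R := ler_peMr (ltW eps_gt0) S_ge1.
have epsS_hi : eps * (tail_sum D j)%:~R <= 1 - eps.
  apply: le_trans (ler_wpM2l (ltW eps_gt0) S_le') _.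
  by rewrite mulrBr mulr1; have := eps_small; lra.
left=> l /ord_leq_split [-> | /Dbin //].
have : (-1 < D j)%R by rewrite -(ltr_int R); lra.
have : (D j < 2)%R by rewrite -(ltr_int R); lra.
lia.
Qed.

Lemma coherent D : (forall j, `|corner D j| < 1 + eps) -> coherent_from D 0.
Proof.
move=> Dsmall; apply: (@down_ind d (coherent_from D)).
  by move=> n dn; left=> l; have := ltn_ord l; lia.
move=> n lt_nd [Dbin | NDbin]; first exact: (@coherent_step D (Ordinal lt_nd)).
have := @coherent_step (fun l => - D l) (Ordinal lt_nd) NDbin.
rewrite cornerN normrN => /(_ (Dsmall _)) [NDbin' | DDbin]; first by right.
by left=> l /DDbin /=; rewrite opprK.
Qed.

Lemma binary_multiple_zero D :
  binary_from D 0 -> (d.+1%:Z %| \sum_l D l)%Z -> forall l, D l = 0.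
Proof.
move=> Dbin /dvdz_mod0P sum_mod.
have sum_ge0 : 0 <= \sum_l D l by apply: sumr_ge0 => l _; case/andP: (Dbin l isT).
have sum_le : \sum_l D l <= d%:Z.
  apply: (@le_trans _ _ (\sum_(l < d) (1 : int))).
    by apply: ler_sum => l _; case/andP: (Dbin l isT).
  by rewrite sumr_const card_ord natz.
have sum0 : \sum_l D l = 0.
  by rewrite modz_small in sum_mod => //; apply/andP; split.
by move=> l; apply: (psumr_eq0P _ sum0) => // i _; case/andP: (Dbin i isT).
Qed.

Lemma color_eq k k' : color k = color k' -> (d.+1%:Z %| \sum_l (k l - k' l))%Z.
Proof.
have mod_lt m : (absz (m %% d.+1%:Z)%Z < d.+1)%N.
  by have := @ltz_pmod m d.+1%:Z isT; have := @modz_ge0 m d.+1%:Z isT; lia.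
move=> /(congr1 val); rewrite /= !inordK // => same_mod.
rewrite sumrB -eqz_mod_dvd; apply/eqP.
have := @modz_ge0 (\sum_l k l) d.+1%:Z isT; have := @modz_ge0 (\sum_l k' l) d.+1%:Z isT.
lia.
Qed.

(* Otherwise all corners of D = k - k' are below
   1 + eps, so D is sign-coherent, and its sum is a multiple of d + 1. *)
Lemma same_color_far k k' x y : k <> k' -> color k = color k' ->
  tile k x -> tile k' y -> eps <= euclid_dist x y.
Proof.
move=> neq_kk' same_color /tileP kx /tileP k'y; rewrite leNgt; apply/negP => close.
pose D l := k l - k' l.
have Dsmall j : `|corner D j| < 1 + eps.
  rewrite -cornerB; have := le_lt_trans (coord_le_dist x y j) close.
  move: (kx j) (k'y j) => /andP[? ?] /andP[? ?]; rewrite !ltr_norml => /andP[? ?].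
  by apply/andP; split; lra.
have dvdD := color_eq same_color.
have D0 : forall l, D l = 0.
  case: (coherent Dsmall) => [Dbin | NDbin]; first exact: binary_multiple_zero.
  move=> l; apply/eqP; rewrite -oppr_eq0; apply/eqP.
  by apply: binary_multiple_zero NDbin _ l; rewrite sumrN rpredN.
by apply: neq_kk'; apply: funext => l; apply/eqP; rewrite -subr_eq0; apply/eqP; exact: D0.
Qed.

End SkewLattice.

Theorem mainTheorem12 (R : realType) (d : nat) : (1 <= d)%N ->
  exists (I : Type) (T : I -> set 'rV[R]_d) (c : I -> 'I_d.+1),
    colored_tiling T c /\
    (forall i, (volume (T i) <= 1)%E) /\
    (((1 + 2 * (d%:R - 1) * Num.sqrt 2)^-1)%:E <= min_dist T c)%E.
Proof.
move=> d_ge1; pose eps : R := d%:R^-1.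
have eps_gt0 : 0 < eps by rewrite invr_gt0 ltr0n.
have eps_small : eps * d%:R <= 1 by rewrite mulVf // pnatr_eq0 -lt0n.
exists ('I_d -> int), (tile eps), (@color d); split; [split; [|split; [|split]] | split].
- move=> k; split; first exact: box_closed.
  by split; [exact: box_bounded | exact: box_connected].
- by apply/seteqP; split=> // x _; have [k kx] := tile_cover eps x; exists k.
- move=> k k' neq_kk' x [kx k'x].
  split; split; try exact: subset_closure.
    exact: tile_not_interior kx k'x.
  by apply: tile_not_interior k'x kx => eq_k'k; apply: neq_kk'.
- exact: tile_locally_finite.
- by move=> k; exact: tile_volume.
- (* Same-colored tiles are 1/d apart, and 1 + 2 (d - 1) sqrt 2 >= d. *)
  apply: le_ereal_inf_tmp => _ [k [k' [x [y [neq_kk' [same [kx [k'y ->]]]]]]]].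
  rewrite lee_fin; apply: le_trans (same_color_far eps_gt0 eps_small neq_kk' same kx k'y).
  have sqrt2_ge1 : 1 <= Num.sqrt (2 : R) by rewrite -{1}sqrtr1 ler_sqrt // ler1n.
  have d_ge1' : 1 <= d%:R :> R by rewrite ler1n.
  rewrite lef_pV2 ?posrE //; nra.
Qed.
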